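(* Let $X,Y$ be finite sets and $F_X,F_Y$ filtrations over $X$ and $Y$. If $F_X$ and $F_Y$ are weakly equivalent, then $\mathbf{mgm}(F_X)=\mathbf{mgm}(F_Y)$ as multisets of intervals.
   Context: $\mathbf{pow}(X)$ is the set of nonempty subsets of $X$; a filtration over $X$ is an order-preserving map $F_X:(\mathbf{pow}(X),\subset)\to(\mathbb{R},\leq)$. For a surjection $\varphi_X:Z\twoheadrightarrow X$, the pullback filtration is $\varphi_X^*F_X:\mathbf{pow}(Z)\to\mathbb{R}$, $\kappa\mapsto F_X(\varphi_X(\kappa))$. $F_X,F_Y$ are weakly equivalent if there exist a finite set $Z$ and surjections $\varphi_X:Z\twoheadrightarrow X$, $\varphi_Y:Z\twoheadrightarrow Y$ with $\varphi_X^*F_X=\varphi_Y^*F_Y$. The mergegram of $F_X$: let $C_X(t)$ be the set of inclusion-maximal elements of $\{\sigma\in\mathbf{pow}(X)\mid F_X(\sigma)\leq t\}$; for nonempty $\sigma$, $I_\sigma:=\{t\in\mathbb{R}\mid\sigma\in C_X(t)\}$ (equivalently $I_\sigma=[F_X(\sigma),\min_{\sigma\subsetneq\tau\subset X}F_X(\tau))$ with $\min\emptyset=+\infty$); $\mathbf{mgm}(F_X)$ is the multiset of the nonempty $I_\sigma$, one entry per nonempty $\sigma\subset X$ with $I_\sigma\neq\emptyset$. *)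

From HB Require Import structures.
From mathcomp Require Import all_boot all_order all_algebra.
From mathcomp Require Import reals.
Set Implicit Arguments. Unset Strict Implicit. Unset Printing Implicit Defensive.
Import Order.TTheory GRing.Theory Num.Theory.
Local Open Scope ring_scope.

(* Subsets of a finite set X are {set X}; pow(X) = nonempty ones.
   A filtration is a function on {set X} (its value on set0 is irrelevant)
   that is order preserving on nonempty subsets. *)
Definition filtration (R : realType) (X : finType) (F : {set X} -> R) : Prop :=
  forall s t : {set X}, s != set0 -> s \subset t -> F s <= F t.

Definition pullback (R : realType) (Z X : finType) (phi : Z -> X)
  (F : {set X} -> R) : {set Z} -> R := fun k => F (phi @: k).

Definition surjective_map (A B : Type) (f : A -> B) : Prop :=
  forall b, exists a, f a = b.

Definition weakly_equivalent (R : realType) (X Y : finType)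
  (FX : {set X} -> R) (FY : {set Y} -> R) : Prop :=
  exists (Z : finType) (phX : Z -> X) (phY : Z -> Y),
    surjective_map phX /\ surjective_map phY /\
    forall k : {set Z}, k != set0 -> pullback phX FX k = pullback phY FY k.

(* Upper end of I_sigma: min_{sigma ⊊ tau} F tau, +oo if no such tau
   (as an interval bound, BLeft = open upper end ")" ). *)
Definition mgm_upper (R : realType) (X : finType) (F : {set X} -> R)
  (s : {set X}) : itv_bound R :=
  \big[Order.min/(BInfty R false)]_(t : {set X} | s \proper t) BLeft (F t).

Definition mgm_itv (R : realType) (X : finType) (F : {set X} -> R)
  (s : {set X}) : interval R :=
  Interval (BLeft (F s)) (mgm_upper F s).

Definition mgm_nonempty (R : realType) (X : finType) (F : {set X} -> R)
  (s : {set X}) : bool :=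
  (BLeft (F s) < mgm_upper F s)%O.

(* The mergegram as a list of intervals (a multiset, compared up to perm_eq):
   one entry per nonempty sigma with I_sigma nonempty. *)
Definition mgm (R : realType) (X : finType) (F : {set X} -> R) : seq (interval R) :=
  [seq mgm_itv F s | s <- enum [pred s : {set X} | (s != set0) && mgm_nonempty F s]].

From HB Require Import structures.
From mathcomp Require Import all_boot all_order all_algebra.
From mathcomp Require Import reals.
Set Implicit Arguments. Unset Strict Implicit. Unset Printing Implicit Defensive.
Import Order.TTheory GRing.Theory Num.Theory.

(* The mergegram is invariant under pullback along a surjection
   phi : Z -> X: for a nonempty subset k of Z whose interval I_k for the
   pullback filtration is nonempty, k must be saturated (k = phi^-1(phi k)),
   since otherwise phi^-1(phi k) is a proper superset of k with the same
   filtration value, which makes I_k empty.  Saturated subsets of Z are in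
   bijection with subsets of X via s |-> phi^-1 s, and this bijection
   preserves the intervals.  Hence mgm(phi^* F) is a permutation of mgm(F).
   Moreover mgm(F) only depends on the values of F on nonempty sets.  A weak
   equivalence gives phX^* FX = phY^* FY on nonempty sets, so
   mgm FX ~ mgm (phX^* FX) = mgm (phY^* FY) ~ mgm FY. *)

(* The mergegram only depends on the values of F on nonempty sets: all proper
   supersets of a set are nonempty, and only nonempty sets are listed. *)
Lemma mgm_upper_congr (R : realType) (X : finType) (F G : {set X} -> R) :
  (forall s, s != set0 -> F s = G s) ->
  forall s, mgm_upper F s = mgm_upper G s.
Proof.
move=> eqFG s; apply: eq_bigr => t st; rewrite eqFG //.
by apply/negP => /eqP t0; move: st; rewrite t0 properE sub0set andbF.
Qed.

Lemma mgm_congr (R : realType) (X : finType) (F G : {set X} -> R) :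
  (forall s, s != set0 -> F s = G s) -> mgm F = mgm G.
Proof.
move=> eqFG; have eqU := mgm_upper_congr eqFG.
have eqP : [pred s : {set X} | (s != set0) && mgm_nonempty F s] =i
           [pred s : {set X} | (s != set0) && mgm_nonempty G s].
  move=> s; rewrite !inE; case: (boolP (s != set0)) => //= s0.
  by rewrite /mgm_nonempty eqU eqFG.
rewrite /mgm (eq_enum eqP); apply/eq_in_map => s.
by rewrite mem_enum inE => /andP [s0 _]; rewrite /mgm_itv eqU eqFG.
Qed.

Definition saturated (Z X : finType) (phi : Z -> X) (k : {set Z}) : bool :=
  phi @^-1: (phi @: k) == k.

Section PullbackInvariance.
Variables (R : realType) (Z X : finType) (phi : Z -> X) (F : {set X} -> R).
Hypothesis phi_surj : surjective_map phi.
Let G := pullback phi F.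

Lemma imset_preimset (s : {set X}) : phi @: (phi @^-1: s) = s.
Proof.
apply/setP => x; apply/imsetP/idP => [[z]|xs].
  by rewrite inE => ? ->.
by have [z zx] := phi_surj x; exists z; rewrite // inE zx.
Qed.

Lemma preimset_inj : injective (fun s : {set X} => phi @^-1: s).
Proof. by move=> a b eqab; rewrite -(imset_preimset a) eqab imset_preimset. Qed.

Lemma pullback_preimset (s : {set X}) : G (phi @^-1: s) = F s.
Proof. by rewrite /G /pullback imset_preimset. Qed.

Lemma saturated_preimset (s : {set X}) : saturated phi (phi @^-1: s).
Proof. by rewrite /saturated imset_preimset. Qed.

(* Proper supersets of a saturated k contain, through phi, the proper
   supersets of phi k, and conversely via preimages. *)
Lemma mgm_upper_saturated (k : {set Z}) : saturated phi k ->
  mgm_upper G k = mgm_upper F (phi @: k).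
Proof.
move=> /eqP sat; rewrite /mgm_upper; apply/le_anti/andP; split.
  apply: le_bigmin; first exact: bigmin_le_id.
  move=> r pr; apply: (@bigmin_inf _ _ _ _ (phi @^-1: r)).
    rewrite properE -{1}sat preimsetS ?(proper_sub pr) //=.
    apply/negP => /(imsetS phi); rewrite !imset_preimset => rk.
    by move: pr; rewrite properE rk andbF.
  by rewrite pullback_preimset.
apply: le_bigmin; first exact: bigmin_le_id.
move=> t pt; apply: (@bigmin_inf _ _ _ _ (phi @: t)) => //.
rewrite properE imsetS ?(proper_sub pt) //=.
apply/negP => tk; suff : t \subset k by apply/negP: (proper_subn pt).
rewrite -sat; apply/subsetP => z zt; rewrite inE.
by apply: (subsetP tk); apply: imset_f.
Qed.

(* A nonempty interval for the pullback can only come from a saturated set: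
   the saturation of k has the same filtration value as k. *)
Lemma mgm_nonempty_saturated (k : {set Z}) : mgm_nonempty G k -> saturated phi k.
Proof.
move=> ne; rewrite /saturated eqEsubset; apply/andP; split; last first.
  by apply/subsetP => z zk; rewrite inE imset_f.
apply/negPn/negP => nsub.
have pk : k \proper phi @^-1: (phi @: k).
  by rewrite properE nsub andbT; apply/subsetP => z zk; rewrite inE imset_f.
have : (mgm_upper G k <= BLeft (G (phi @^-1: (phi @: k))))%O.
  exact: bigmin_le_cond.
rewrite pullback_preimset => upk.
by have := lt_le_trans ne upk; rewrite /G /pullback ltxx.
Qed.

Lemma mgm_itv_preimset (s : {set X}) : mgm_itv G (phi @^-1: s) = mgm_itv F s.
Proof.
by rewrite /mgm_itv mgm_upper_saturated ?saturated_preimset // imset_preimset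
  pullback_preimset.
Qed.

Lemma mgm_nonempty_preimset (s : {set X}) :
  mgm_nonempty G (phi @^-1: s) = mgm_nonempty F s.
Proof.
by rewrite /mgm_nonempty mgm_upper_saturated ?saturated_preimset //
  imset_preimset pullback_preimset.
Qed.

Lemma mgm_index_preimset :
  perm_eq (enum [pred k : {set Z} | (k != set0) && mgm_nonempty G k])
          [seq phi @^-1: s | s : {set X} <-
             enum [pred s : {set X} | (s != set0) && mgm_nonempty F s]].
Proof.
apply: uniq_perm; first exact: enum_uniq.
  by rewrite map_inj_uniq ?enum_uniq //; exact: preimset_inj.
move=> k; rewrite mem_enum inE; apply/andP/mapP => [[k0 ne]|[s]].
  have /eqP sat := mgm_nonempty_saturated ne.
  exists (phi @: k); last by rewrite sat.
  by rewrite mem_enum inE imset_eq0 k0 -mgm_nonempty_preimset sat.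
rewrite mem_enum inE => /andP [s0 ne] ->.
split; last by rewrite mgm_nonempty_preimset.
by apply: contraNneq s0 => s0'; rewrite -(imset_preimset s) s0' imset0.
Qed.

Lemma mgm_pullback : perm_eq (mgm G) (mgm F).
Proof.
apply: perm_trans (perm_map _ mgm_index_preimset) _.
by rewrite -map_comp (eq_map mgm_itv_preimset).
Qed.
End PullbackInvariance.

Theorem mainTheorem14 (R : realType) (X Y : finType)
  (FX : {set X} -> R) (FY : {set Y} -> R) :
  filtration FX -> filtration FY ->
  weakly_equivalent FX FY ->
  perm_eq (mgm FX) (mgm FY).
Proof.
move=> _ _ [Z [phX [phY [surjX [surjY eq_pullbacks]]]]].
have mgmX := mgm_pullback FX surjX; have mgmY := mgm_pullback FY surjY.
rewrite perm_sym in mgmX; apply: perm_trans mgmX _.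
by rewrite (mgm_congr eq_pullbacks).
Qed.
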